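(* Let $G=(V,E)$ be a directed graph, $s\neq t$ vertices, $k\ge 1$ an integer and $e(u,v)\in E$. Suppose that for all integers $0\le k_f,k_b\le k-1$ with $k_f+1+k_b\le k$, either (1) $EV^*_{k_f}(s,u)$ or $EV^*_{k_b}(v,t)$ does not exist, or (2) $EV^*_{k_f}(s,u)\cap EV^*_{k_b}(v,t)\neq\emptyset$. Then $e(u,v)$ is not an edge of $SPG_k(s,t)$.
   Context: A path from $x$ to $y$ in $G$ is a vertex sequence $x=v_0,\dots,v_l=y$ with $(v_{i-1},v_i)\in E$; its length is $l$ and $V(p)$, $E(p)$ are its vertex and edge sets. A simple path has no repeated vertex. $SPG_k(s,t)$ is the subgraph of $G$ formed by the union of vertex sets and edge sets of all simple paths from $s$ to $t$ of length at most $k$. For a vertex $u$ and integer $l\ge 0$, $EV^*_l(s,u)$ exists iff there is at least one simple path from $s$ to $u$ of length at most $l$ not containing $t$, and then $EV^*_l(s,u)$ is the intersection of $V(p)$ over all such paths. Symmetrically, $EV^*_l(v,t)$ exists iff there is at least one simple path from $v$ to $t$ of length at most $l$ not containing $s$, and then it is the intersection of $V(p)$ over all such paths. *)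

From mathcomp Require Import all_boot.
Set Implicit Arguments. Unset Strict Implicit. Unset Printing Implicit Defensive.

Section Paths.
Variables (V : finType) (E : rel V).

(* A path from x to y is a vertex sequence x = v_0 :: [v_1; ...; v_l] with
   (v_{i-1}, v_i) in E and v_l = y; represented by its head x and tail p.
   Its length is l = size p, its vertex set is x :: p. *)
Definition is_path (x y : V) (p : seq V) : bool :=
  path E x p && (last x p == y).

Definition path_len (p : seq V) : nat := size p.

Definition path_verts (x : V) (p : seq V) : seq V := x :: p.

Definition path_edges (x : V) (p : seq V) : seq (V * V) := zip (x :: p) p.

Definition simple_path (x y : V) (p : seq V) : bool :=
  is_path x y p && uniq (x :: p).

Definition edge_in_SPG (k : nat) (s t a b : V) : Prop :=
  exists p, [/\ simple_path s t p, path_len p <= k & (a, b) \in path_edges s p].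

Definition fwd_path (l : nat) (s t u : V) (p : seq V) : bool :=
  [&& simple_path s u p, path_len p <= l & t \notin path_verts s p].

Definition EVf_exists (l : nat) (s t u : V) : Prop := exists p, fwd_path l s t u p.

(* w is in EV*_l(s,u) (intersection of V(p) over all such paths) *)
Definition EVf_mem (l : nat) (s t u w : V) : Prop :=
  forall p, fwd_path l s t u p -> w \in path_verts s p.

Definition bwd_path (l : nat) (s t v : V) (p : seq V) : bool :=
  [&& simple_path v t p, path_len p <= l & s \notin path_verts v p].

Definition EVb_exists (l : nat) (s t v : V) : Prop := exists p, bwd_path l s t v p.

Definition EVb_mem (l : nat) (s t v w : V) : Prop :=
  forall p, bwd_path l s t v p -> w \in path_verts v p.

End Paths.

From mathcomp Require Import all_boot zify.

Set Implicit Arguments.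
Unset Strict Implicit.
Unset Printing Implicit Defensive.

(* An edge (u, v) of a simple s-t path of length at most k cuts it into a
   prefix from s to u and a suffix from v to t, of lengths kf and kb with
   kf + 1 + kb <= k.  By simplicity the two parts are vertex-disjoint, so the
   prefix avoids t and the suffix avoids s: both EV* sets exist, and a common
   vertex of the two intersections would lie on both parts. *)

Section SimplePathSplit.
Variables (V : finType) (E : rel V).

Lemma path_edges_splitP (x a b : V) (p : seq V) :
  (a, b) \in path_edges x p ->
  exists q1 q2, p = q1 ++ b :: q2 /\ last x q1 = a.
Proof.
elim: p x => [|y p IHp] x //=; rewrite in_cons => /orP [/eqP [-> ->]|/IHp].
  by exists [::], p.
by move=> [q1 [q2 [-> <-]]]; exists (y :: q1), q2.
Qed.

Lemma simple_path_cat (x y a : V) (q1 q2 : seq V) :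
  simple_path E x y (q1 ++ a :: q2) ->
  [/\ simple_path E x (last x q1) q1, simple_path E a y q2
    & {in path_verts x q1, forall w, w \notin path_verts a q2}].
Proof.
rewrite /simple_path /is_path cat_path last_cat -cat_cons cat_uniq.
move=> /andP [/andP [/and3P [path1 _ path2] last2] /and3P [uniq1 disj uniq2]].
split; rewrite /simple_path /is_path.
- by rewrite path1 eqxx.
- by rewrite last2 uniq2 !andbT.
by move=> w w1; apply: contraNN disj => w2; apply/hasP; exists w.
Qed.

Variables (s t v : V) (q1 q2 : seq V).
Hypothesis simple_st : simple_path E s t (q1 ++ v :: q2).

Lemma fwd_path_prefix : fwd_path E (size q1) s t (last s q1) q1.
Proof.
have [simple1 simple2 disj] := simple_path_cat simple_st.
rewrite /fwd_path simple1 leqnn /=; apply: (contraL (disj t)).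
by case/andP: simple2 => /andP [_ /eqP <-] _; apply: mem_last.
Qed.

Lemma bwd_path_suffix : bwd_path E (size q2) s t v q2.
Proof.
have [_ simple2 disj] := simple_path_cat simple_st.
by rewrite /bwd_path simple2 leqnn disj ?mem_head.
Qed.

End SimplePathSplit.

Theorem theorem3p4 (V : finType) (E : rel V) (s t : V) (k : nat) (u v : V) :
  s != t -> 1 <= k -> E u v ->
  (forall kf kb : nat, kf <= k - 1 -> kb <= k - 1 -> kf + 1 + kb <= k ->
     (~ EVf_exists E kf s t u \/ ~ EVb_exists E kb s t v) \/
     (exists w, EVf_mem E kf s t u w /\ EVb_mem E kb s t v w)) ->
  ~ edge_in_SPG E k s t u v.
Proof.
move=> _ _ _ separating [p [simple_st len_p edge_uv]].
have [q1 [q2 [def_p last_q1]]] := path_edges_splitP edge_uv.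
rewrite {}def_p in simple_st len_p.
have fwd := fwd_path_prefix simple_st; rewrite last_q1 in fwd.
have bwd := bwd_path_suffix simple_st.
have [_ _ disj] := simple_path_cat simple_st.
have len_split : size q1 + 1 + size q2 <= k.
  by move: len_p; rewrite /path_len size_cat /=; lia.
have [le_q1 le_q2] : size q1 <= k - 1 /\ size q2 <= k - 1 by lia.
case: (separating _ _ le_q1 le_q2 len_split) =>
  [[no_fwd|no_bwd]|[w [w_fwd w_bwd]]].
- by apply: no_fwd; exists q1.
- by apply: no_bwd; exists q2.
- by apply: (negP (disj w (w_fwd _ fwd))); apply: w_bwd.
Qed.
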